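(* Consider a connectivity graph $G=(V,E)$ with source $s$, a set $R$ of $n$ relay nodes, and a terminal node $t$, and let $p'$ be the probability that two given nodes of $G$ are joined by an edge. Let $0\le k\le n$, let $(V_k,\overline{V}_k)$ be any partition of $R$ with $|V_k|=k$ and $|\overline V_k|=n-k$, and let $C_k$ be the capacity of the corresponding $s$-$t$-cut. Then for every $0<\epsilon<1$, $$\Pr\big[C_k\le (1-\epsilon)\,\mathbf{E}[C_k]\big]\;\le\;\exp\!\Big(-\Big(\frac{\epsilon^2 (n-k)\,p'}{2}-\ln(k+1)\Big)\Big).$$
   Context: Quasi random geometric graph: fix reals $0\le r<r'\le 1$ and $p\in[0,1]$. Nodes are placed independently and uniformly at random in $[0,1]^2$. For two nodes $u,v$ with Euclidean distance $d(u,v)$: $(u,v)\in E$ if $d(u,v)\le r$; $(u,v)\notin E$ if $d(u,v)>r'$; and $(u,v)\in E$ with probability $p$ if $r<d(u,v)\le r'$. The graph is undirected. Connectivity graph: $V=\{s\}\cup R\cup T$, where $s$ is a source node, $R$ is a set of $n$ relay nodes and $T$ is a set of terminal nodes, and the graph is a quasi random geometric graph on $V$, except that the source is never joined directly to a terminal (every message passes through at least one relay). The source only sends and the terminals only receive. Edge capacities are $C_{ij}=1$ if $(i,j)\in E$ and $C_{ij}=0$ otherwise, with $C_{ij}=C_{ji}$. The connection probability $p'$ is the probability that two given nodes are joined by an edge; it is the same for every pair of nodes that may be joined. Standing assumption: for each fixed vertex $i$, the indicators $\{C_{ij}\}_{j\neq i}$ are mutually independent Bernoulli($p'$) random variables.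 $s$-$t$-cut of size $k$: for a terminal $t\in T$, a partition $R=V_k\cup\overline V_k$ with $V_k\cap\overline V_k=\emptyset$, $|V_k|=k$ and $|\overline V_k|=n-k$. The sets $\{s\}\cup V_k$ and $\overline V_k\cup\{t\}$ are the two sides of the cut. Its capacity is $$C_k=\sum_{i\in\overline V_k}C_{si}+\sum_{j\in V_k}\sum_{i\in\overline V_k}C_{ji}+\sum_{j\in V_k}C_{jt}.$$ *)

From mathcomp Require Import all_boot.
From Stdlib Require Import Reals.
Set Implicit Arguments.
Unset Strict Implicit.
Unset Printing Implicit Defensive.

(* Vertices of the connectivity graph with n relays and m terminals:
   None = the source s, Some (inl i) = relay i, Some (inr j) = terminal j. *)
Definition vertex (n m : nat) : finType := option ('I_n + 'I_m)%type.
Definition src {n m : nat} : vertex n m := None.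
Definition relay {n m : nat} (i : 'I_n) : vertex n m := Some (inl i).
Definition term {n m : nat} (j : 'I_m) : vertex n m := Some (inr j).

Definition is_term {n m : nat} (v : vertex n m) : bool :=
  if v is Some (inr _) then true else false.

(* Pairs of distinct nodes that may be joined by an edge:
   the source is never joined directly to a terminal. *)
Definition joinable {n m : nat} (u v : vertex n m) : bool :=
  [&& u != v, ~~ ((u == src) && is_term v) & ~~ ((v == src) && is_term u)].

Definition is_prob {Omega : finType} (P : Omega -> R) : Prop :=
  (forall w, (0 <= P w)%R) /\ \big[Rplus/0%R]_(w : Omega) P w = 1%R.

Definition Pr {Omega : finType} (P : Omega -> R) (A : Omega -> bool) : R :=
  \big[Rplus/0%R]_(w : Omega | A w) P w.

Definition Ex {Omega : finType} (P : Omega -> R) (X : Omega -> R) : R :=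
  \big[Rplus/0%R]_(w : Omega) (P w * X w)%R.

Definition b2R (b : bool) : R := if b then 1%R else 0%R.

(* Standing assumption: for each vertex i, the indicators C i j (j ranging
   over the nodes that may be joined to i) are mutually independent
   Bernoulli(p') random variables. *)
Definition indep_bernoulli {Omega : finType} {n m : nat} (P : Omega -> R)
    (C : vertex n m -> vertex n m -> Omega -> bool) (p' : R) : Prop :=
  forall (i : vertex n m) (S : {set vertex n m}) (b : vertex n m -> bool),
    (forall j, j \in S -> joinable i j) ->
    Pr P (fun w => [forall j in S, C i j w == b j]) =
    \big[Rmult/1%R]_(j in S) (if b j then p' else (1 - p')%R).

(* Capacity of the s-t-cut with sides {s} ∪ Vk and (R \ Vk) ∪ {t}. *)
Definition cut_capacity {Omega : finType} {n m : nat}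
    (C : vertex n m -> vertex n m -> Omega -> bool)
    (Vk : {set 'I_n}) (t : 'I_m) (w : Omega) : nat :=
  (\sum_(i in ~: Vk) C src (relay i) w
   + \sum_(j in Vk) \sum_(i in ~: Vk) C (relay j) (relay i) w
   + \sum_(j in Vk) C (relay j) (term t) w)%N.

Definition Rleb (x y : R) : bool := if Rle_dec x y then true else false.

From mathcomp Require Import all_boot.
From Stdlib Require Import Reals.
From HB Require Import structures.
From Stdlib Require Import Lra Psatz.

Set Implicit Arguments.
Unset Strict Implicit.

(* The capacity C_k of the cut (V_k, R \ V_k) is a sum of k+1 "star sums",
   one for each vertex v on the source side (the source and the relays of
   V_k): the number of edges from v to its neighbours on the far side.  Each
   star sum counts edges at a single vertex towards distinct joinable nodes,
   so by the standing independence assumption it is a sum of N independent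
   Bernoulli(p') indicators, with N = n-k for the source and N = n-k+1 for a
   relay (which may also reach the terminal).
   1. A product-moment identity for such indicators (star_moment) gives the
      mean N p' and the factorial moment E[prod (1 - eps C)] = (1 - eps p')^N.
   2. Markov's inequality for prod (1 - eps C) = (1 - eps)^X yields the
      Chernoff lower tail Pr[X <= (1-eps) N p'] <= exp(-eps^2 N p'/2).
   3. If C_k <= (1-eps) E[C_k], then by linearity of expectation some star
      sum is at most (1-eps) times its mean; the union bound over the k+1
      stars, each bounded by exp(-eps^2 (n-k) p'/2), gives the theorem. *)

(* Real addition is a commutative monoid, so the generic bigop lemmas apply
   to sums of reals. *)
Lemma Rplus_associative : associative Rplus.
Proof. by move=> x y z; ring. Qed.
HB.instance Definition _ :=
  Monoid.isComLaw.Build R 0%R Rplus Rplus_associative Rplus_comm Rplus_0_l.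

Definition star_sum {Omega : finType} {n m : nat}
    (C : vertex n m -> vertex n m -> Omega -> bool) (v : vertex n m)
    (s : seq (vertex n m)) (w : Omega) : nat :=
  \sum_(u <- s) C v u w.

Section CutStars.
Variables (n m : nat) (Vk : {set 'I_n}) (t : 'I_m).

Definition far_relays : seq (vertex n m) := [seq relay i | i <- enum (~: Vk)].

Definition cut_centers : seq (vertex n m) := src :: [seq relay j | j <- enum Vk].

Definition cut_leaves (v : vertex n m) : seq (vertex n m) :=
  if v == src then far_relays else term t :: far_relays.

Lemma cut_capacity_stars (Omega : finType) (C : vertex n m -> vertex n m -> Omega -> bool) w :
  cut_capacity C Vk t w = (\sum_(v <- cut_centers) star_sum C v (cut_leaves v) w)%N.
Proof.
rewrite /cut_capacity big_cons big_map /cut_leaves eqxx /star_sum /far_relays big_map.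
rewrite big_enum -addnA; congr addn; rewrite big_enum -big_split /=.
by apply: eq_bigr => j _; rewrite big_cons big_map big_enum addnC.
Qed.

Lemma size_cut_centers : size cut_centers = (#|Vk|).+1.
Proof. by rewrite /= size_map cardE. Qed.

Lemma size_cut_leaves (v : vertex n m) : (n - #|Vk| <= size (cut_leaves v)).
Proof.
have sz : size far_relays = n - #|Vk|.
  by rewrite size_map -cardE [#|~: Vk|]cardsCs setCK card_ord.
by rewrite /cut_leaves; case: ifP; rewrite /= sz.
Qed.

Lemma cut_leaves_uniq (v : vertex n m) : uniq (cut_leaves v).
Proof.
have uniq_far : uniq far_relays by rewrite map_inj_uniq ?enum_uniq // => i j [].
by rewrite /cut_leaves; case: ifP => //= _; rewrite uniq_far andbT; apply/mapP => -[].
Qed.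

Lemma cut_leaves_joinable (v : vertex n m) :
  v \in cut_centers -> forall u, u \in cut_leaves v -> joinable v u.
Proof.
rewrite in_cons => /orP [/eqP -> | /mapP [j jV ->]] u.
  by rewrite /cut_leaves eqxx => /mapP [i _ ->].
rewrite /cut_leaves /= in_cons => /orP [/eqP -> // | /mapP [i iV ->]].
rewrite /joinable /= andbT; apply/eqP => -[ji]; move: iV.
by rewrite mem_enum in_setC -ji -(mem_enum (mem Vk)) jV.
Qed.

End CutStars.

(* m cannot be inferred from the arguments of cut_centers. *)
Arguments cut_centers {n m} Vk.

Open Scope R_scope.

Lemma RlebP (x y : R) : reflect (x <= y) (Rleb x y).
Proof. by rewrite /Rleb; case: Rle_dec => h; constructor. Qed.

Lemma sum_ge0 {I : Type} (r : seq I) (F : I -> R) :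
  (forall j, 0 <= F j) -> 0 <= \big[Rplus/0]_(j <- r) F j.
Proof. by move=> F_ge0; elim/big_rec: _ => [|j a _ a_ge0]; [lra | have := F_ge0 j; lra]. Qed.

Lemma sum_ge_term {I : eqType} (r : seq I) (F : I -> R) (j : I) :
  (forall i, 0 <= F i) -> j \in r -> F j <= \big[Rplus/0]_(i <- r) F i.
Proof.
move=> F_ge0; elim: r => [//|i r IH]; rewrite in_cons big_cons => /orP [/eqP ->|jr].
  by have := sum_ge0 r F_ge0; lra.
by have := IH jr; have := F_ge0 i; lra.
Qed.

Lemma sum_lt {I : eqType} (r : seq I) (f g : I -> R) :
  r != [::] -> (forall j, j \in r -> f j < g j) ->
  \big[Rplus/0]_(j <- r) f j < \big[Rplus/0]_(j <- r) g j.
Proof.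
elim: r => [//|j r IH] _ fg; rewrite !big_cons.
have fg_j : f j < g j by apply: fg; rewrite in_cons eqxx.
have {}fg i : i \in r -> f i < g i by move=> ir; apply: fg; rewrite in_cons ir orbT.
case: r IH fg => [|i r] IH fg; first by rewrite !big_nil; lra.
by have := IH isT fg; lra.
Qed.

Lemma sum_le_some_term {I : eqType} (r : seq I) (f g : I -> R) :
  r != [::] -> \big[Rplus/0]_(j <- r) f j <= \big[Rplus/0]_(j <- r) g j ->
  has (fun j => Rleb (f j) (g j)) r.
Proof.
move=> r_nonempty sum_fg; apply/hasPn => all_gt.
have gt_fg j : j \in r -> g j < f j by move=> /all_gt /RlebP /Rnot_le_lt.
by have /Rlt_not_le := sum_lt r_nonempty gt_fg; apply.
Qed.

Lemma sum_le {I : eqType} (r : seq I) (f g : I -> R) :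
  (forall j, j \in r -> f j <= g j) ->
  \big[Rplus/0]_(j <- r) f j <= \big[Rplus/0]_(j <- r) g j.
Proof.
elim: r => [|j r IH] fg; first by rewrite !big_nil; lra.
rewrite !big_cons; apply: Rplus_le_compat; first by apply: fg; rewrite mem_head.
by apply: IH => i ir; apply: fg; rewrite in_cons ir orbT.
Qed.

Lemma sum_scale {I : Type} (r : seq I) (f : I -> R) (c : R) :
  \big[Rplus/0]_(j <- r) (c * f j) = c * \big[Rplus/0]_(j <- r) f j.
Proof. by elim: r => [|j r IH]; rewrite ?big_nil ?big_cons ?IH; ring. Qed.

Lemma sum_const {I : Type} (r : seq I) (x : R) :
  \big[Rplus/0]_(j <- r) x = INR (size r) * x.
Proof.
elim: r => [|j r IH]; first by rewrite big_nil /=; ring.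
by rewrite big_cons IH (_ : size (j :: r) = (size r).+1) // S_INR; ring.
Qed.

Lemma prod_const_pow (T : finType) (U : {set T}) (x : R) :
  \big[Rmult/1]_(j in U) x = x ^ #|U|.
Proof. by rewrite big_const; elim: #|U| => [//|k IH] /=; rewrite IH. Qed.

Lemma b2R_ge0 (b : bool) : 0 <= b2R b.
Proof. by case: b => /=; lra. Qed.

Lemma b2R_and (a b : bool) : b2R (a && b) = b2R a * b2R b.
Proof. by case: a; case: b => /=; ring. Qed.

Lemma INR_sum_bool {I : Type} (s : seq I) (F : I -> bool) :
  INR (\sum_(j <- s) (F j : nat)) = \big[Rplus/0]_(j <- s) b2R (F j).
Proof.
elim: s => [|j s IH]; first by rewrite !big_nil.
by rewrite !big_cons -plusE plus_INR IH; case: (F j).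
Qed.


Section Expectation.
Variables (Omega : finType) (P : Omega -> R).

Lemma Ex_ext (f g : Omega -> R) : (forall w, f w = g w) -> Ex P f = Ex P g.
Proof. by move=> fg; apply: eq_bigr => w _; rewrite fg. Qed.

Lemma Ex_add (f g : Omega -> R) : Ex P (fun w => f w + g w) = Ex P f + Ex P g.
Proof. by rewrite /Ex; elim/big_rec3: _ => [|w a b c _ ->]; ring. Qed.

Lemma Ex_scale (f : Omega -> R) (c : R) : Ex P (fun w => c * f w) = c * Ex P f.
Proof. by rewrite /Ex; elim/big_rec2: _ => [|w a b _ ->]; ring. Qed.

Lemma Ex_sum (I : Type) (r : seq I) (F : I -> Omega -> R) :
  Ex P (fun w => \big[Rplus/0]_(j <- r) F j w) = \big[Rplus/0]_(j <- r) Ex P (F j).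
Proof.
elim: r => [|j r IH].
  by rewrite big_nil /Ex big1 // => w _; rewrite big_nil Rmult_0_r.
by rewrite big_cons -IH -Ex_add; apply: Ex_ext => w; rewrite big_cons.
Qed.

Lemma Pr_Ex (A : Omega -> bool) : Pr P A = Ex P (fun w => b2R (A w)).
Proof. by rewrite /Pr /Ex big_mkcond; apply: eq_bigr => w _; case: (A w) => /=; ring. Qed.

Hypothesis P_ge0 : forall w, 0 <= P w.

Lemma Ex_mono (f g : Omega -> R) : (forall w, f w <= g w) -> Ex P f <= Ex P g.
Proof.
move=> fg; rewrite /Ex; elim/big_rec2: _ => [|w a b _ ab]; first lra.
by apply: Rplus_le_compat => //; apply: Rmult_le_compat_l.
Qed.

Lemma union_bound (I : eqType) (r : seq I) (A : Omega -> bool) (D : I -> Omega -> bool) :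
  (forall w, A w -> has (fun j => D j w) r) ->
  Pr P A <= \big[Rplus/0]_(j <- r) Pr P (D j).
Proof.
move=> AD; rewrite Pr_Ex (eq_bigr (fun j => Ex P (fun w => b2R (D j w)))); last first.
  by move=> j _; rewrite Pr_Ex.
rewrite -Ex_sum; apply: Ex_mono => w.
case Aw: (A w); last by apply: sum_ge0 => j; apply: b2R_ge0.
have /hasP [j jr Djw] := AD w Aw.
have := sum_ge_term (fun j => b2R_ge0 (D j w)) jr; rewrite /= Djw /=; lra.
Qed.

End Expectation.

Lemma exp_le (x y : R) : x <= y -> exp x <= exp y.
Proof. by move=> /Rle_lt_or_eq_dec [/exp_increasing|->]; lra. Qed.

Lemma exp_pow_INR (x : R) (N : nat) : exp x ^ N = exp (INR N * x).
Proof.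
elim: N => [|N IH]; first by rewrite /= Rmult_0_l exp_0.
by rewrite [LHS]/= IH S_INR -exp_plus; congr exp; ring.
Qed.

Lemma exp_sub_ln (x A : R) : 0 < x -> x * exp (- A) = exp (- (A - ln x)).
Proof.
move=> x_gt0; rewrite (_ : - (A - ln x) = ln x + - A); last by ring.
by rewrite exp_plus exp_ln.
Qed.

(* sinh z >= z for z >= 0, by the mean value theorem (cosh >= 1). *)
Lemma sinh_ge_id (z : R) : 0 <= z -> z <= sinh z.
Proof.
move=> /Rle_lt_or_eq_dec [z_gt0|<-]; last by rewrite sinh_0; lra.
have [c [diff_eq _]] := MVT_cor2 (fun x => sinh x - x) (fun x => cosh x - 1) 0 z z_gt0
  (fun c _ => derivable_pt_lim_minus sinh id c _ _
                (derivable_pt_lim_sinh c) (derivable_pt_lim_id c)).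
have cosh_ge1 : 1 <= cosh c.
  by rewrite /cosh; have := exp_ineq1_le c; have := exp_ineq1_le (- c); lra.
rewrite sinh_0 in diff_eq.
have : 0 <= (cosh c - 1) * (z - 0) by apply: Rmult_le_pos; lra.
lra.
Qed.

(* The Chernoff exponent: -(1-eps) ln(1-eps) - eps <= -eps^2/2 on (0,1).
   With z = -ln(1-eps) this is the inequality sinh z >= z. *)
Lemma chernoff_exponent (eps : R) : 0 < eps < 1 ->
  - ln (1 - eps) * (1 - eps) - eps <= - (eps ^ 2 / 2).
Proof.
move=> eps01; set z := - ln (1 - eps).
have z_ge0 : 0 <= z.
  have : ln (1 - eps) < ln 1 by apply: ln_increasing; lra.
  by rewrite ln_1 /z; lra.
have exp_mz : exp (- z) = 1 - eps by rewrite /z Ropp_involutive exp_ln //; lra.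
have exp_inv : exp z * exp (- z) = 1 by rewrite -exp_plus Rplus_opp_r exp_0.
have := sinh_ge_id z_ge0; rewrite /sinh exp_mz; rewrite exp_mz in exp_inv => sinh_z.
have : z * (1 - eps) <= (exp z - (1 - eps)) / 2 * (1 - eps).
  by apply: Rmult_le_compat_r; lra.
nra.
Qed.

(* Markov's inequality in exponential form: for L <= 0 the indicator of
   x <= a is dominated by exp (L (x - a)). *)
Lemma indicator_le_exp (L x a : R) : L <= 0 -> b2R (Rleb x a) <= exp (L * (x - a)).
Proof.
move=> L_le0; case: RlebP => x_le_a /=; last by apply: Rlt_le; apply: exp_pos.
have : 0 <= L * (x - a) by rewrite (_ : L * (x - a) = (- L) * (a - x)); [nra | ring].
have := exp_ineq1_le (L * (x - a)); lra.
Qed.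

Lemma prod_indicators_exp {I : Type} (s : seq I) (F : I -> bool) (eps : R) : eps < 1 ->
  \big[Rmult/1]_(j <- s) (1 - eps * b2R (F j))
  = exp (ln (1 - eps) * INR (\sum_(j <- s) (F j : nat))).
Proof.
move=> eps_lt1; elim: s => [|j s IH].
  by rewrite !big_nil /= Rmult_0_r exp_0.
rewrite !big_cons -plusE plus_INR IH Rmult_plus_distr_l exp_plus.
case: (F j) => /=; last by rewrite !Rmult_0_r exp_0 Rminus_0_r.
by rewrite !Rmult_1_r exp_ln //; lra.
Qed.

Lemma forall_setU1 (T : finType) (a : T) (U : {set T}) (f : T -> bool) :
  [forall j in a |: U, f j] = f a && [forall j in U, f j].
Proof.
apply/forall_inP/andP => [H | [fa /forall_inP H] j].
  by split; [apply: H; rewrite setU11 | apply/forall_inP => j jU; apply: H; rewrite setU1r].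
by rewrite in_setU1 => /orP [/eqP -> // | /H].
Qed.

Section Star.
Variables (Omega : finType) (P : Omega -> R) (n m : nat).
Variables (C : vertex n m -> vertex n m -> Omega -> bool) (p' : R) (v : vertex n m).
Hypothesis indep : indep_bernoulli P C p'.

Lemma star_moment (c : R) (s : seq (vertex n m)) (U : {set vertex n m}) :
  uniq s -> (forall j, j \in s -> joinable v j) -> (forall j, j \in U -> joinable v j) ->
  (forall j, j \in s -> j \notin U) ->
  Ex P (fun w => b2R [forall j in U, C v j w] *
                 \big[Rmult/1]_(j <- s) (1 - c * b2R (C v j w)))
  = p' ^ #|U| * (1 - c * p') ^ size s.
Proof.
elim: s U => [|j0 s IH] U uniq_s join_s join_U disj.
  rewrite /= Rmult_1_r -prod_const_pow.
  rewrite -(indep (fun _ => true) join_U) Pr_Ex; apply: Ex_ext => w.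
  by rewrite big_nil Rmult_1_r; congr b2R; apply: eq_forallb => j; rewrite eqb_id.
move: uniq_s => /= /andP [j0_notin_s uniq_s].
have j0_notin_U : j0 \notin U by apply: disj; rewrite mem_head.
have in_s j : j \in s -> j \in j0 :: s by move=> js; rewrite in_cons js orbT.
rewrite (@Ex_ext _ P _ (fun w =>
    b2R [forall j in U, C v j w] * \big[Rmult/1]_(j <- s) (1 - c * b2R (C v j w)) +
    (- c) * (b2R [forall j in j0 |: U, C v j w] *
             \big[Rmult/1]_(j <- s) (1 - c * b2R (C v j w))))); last first.
  (* Name the non-arithmetic factors so that ring treats them as atoms. *)
  move=> w; rewrite big_cons forall_setU1 b2R_and.
  by set rest := \big[Rmult/1]_(j <- s) _; set all_U := b2R _; set e0 := b2R (C v j0 w); ring.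
rewrite Ex_add Ex_scale !IH //.
- (* The powers occur at convertible but distinct types; abstract them. *)
  rewrite cardsU1 j0_notin_U add1n -tech_pow_Rmult.
  by move: (p' ^ _) ((1 - c * p') ^ _) => a b; ring.
- by move=> j /in_s; apply: join_s.
- by move=> j; rewrite in_setU1 => /orP [/eqP -> | /join_U]; [apply: join_s; rewrite mem_head|].
- move=> j js; rewrite in_setU1 negb_or disj ?in_s // andbT.
  by apply: contraNneq j0_notin_s => <-.
- by move=> j /in_s; apply: join_s.
- by move=> j /in_s; apply: disj.
Qed.

Lemma edge_prob (j : vertex n m) : joinable v j -> Ex P (fun w => b2R (C v j w)) = p'.
Proof.
move=> join_j; rewrite -Pr_Ex.
have join_1 j' : j' \in [set j] -> joinable v j' by rewrite in_set1 => /eqP ->.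
rewrite -[RHS]pow_1 -(cards1 j) -prod_const_pow -(indep (fun _ => true) join_1).
apply: eq_bigl => w; apply/idP/forall_inP => [Cw j' | /(_ j (set11 j)) /eqP //].
by rewrite in_set1 => /eqP ->; rewrite Cw.
Qed.

Variable s : seq (vertex n m).
Hypotheses (uniq_s : uniq s) (join_s : forall j, j \in s -> joinable v j).

Lemma star_mean : Ex P (fun w => INR (star_sum C v s w)) = INR (size s) * p'.
Proof.
rewrite (@Ex_ext _ _ _ (fun w => \big[Rplus/0]_(j <- s) b2R (C v j w))); last first.
  by move=> w; rewrite /star_sum INR_sum_bool.
by rewrite Ex_sum -sum_const; apply: eq_big_seq => j /join_s /edge_prob.
Qed.

Lemma star_factorial_moment (c : R) :
  Ex P (fun w => \big[Rmult/1]_(j <- s) (1 - c * b2R (C v j w))) = (1 - c * p') ^ size s.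
Proof.
have join0 j : j \in set0 -> joinable v j by rewrite in_set0.
have disj0 j : j \in s -> j \notin set0 by rewrite in_set0.
transitivity (Ex P (fun w => b2R [forall j in set0, C v j w] *
                             \big[Rmult/1]_(j <- s) (1 - c * b2R (C v j w)))).
  apply: Ex_ext => w; rewrite (_ : [forall j in set0, _] = true) /= ?Rmult_1_l //.
  by apply/forall_inP => j; rewrite in_set0.
by rewrite star_moment // cards0 /= Rmult_1_l.
Qed.

Hypotheses (P_ge0 : forall w, 0 <= P w) (p'_01 : 0 <= p' <= 1).

Lemma star_chernoff (eps : R) : 0 < eps < 1 ->
  Pr P (fun w => Rleb (INR (star_sum C v s w)) ((1 - eps) * (INR (size s) * p')))
  <= exp (- (eps ^ 2 * INR (size s) * p' / 2)).
Proof.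
move=> eps01; set L := ln (1 - eps); set a := (1 - eps) * (INR (size s) * p').
have L_lt0 : L < 0 by rewrite /L -ln_1; apply: ln_increasing; lra.
have markov : Pr P (fun w => Rleb (INR (star_sum C v s w)) a) <=
    exp (- L * a) * (1 - eps * p') ^ size s.
  rewrite Pr_Ex -star_factorial_moment -Ex_scale; apply: Ex_mono => // w.
  rewrite prod_indicators_exp; last lra.
  rewrite -exp_plus -/L /star_sum (_ : - L * a + _ = L * (INR (\sum_(j <- s) C v j w) - a)).
    by apply: indicator_le_exp; lra.
  by ring.
have mgf : (1 - eps * p') ^ size s <= exp (INR (size s) * - (eps * p')).
  rewrite -exp_pow_INR; apply: pow_incr; split; first nra.
  by have := exp_ineq1_le (- (eps * p')); lra.
apply: (Rle_trans _ _ _ markov).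
apply: (Rle_trans _ (exp (- L * a) * exp (INR (size s) * - (eps * p')))).
  by apply: Rmult_le_compat_l => //; apply: Rlt_le; apply: exp_pos.
rewrite -exp_plus; apply: exp_le.
have Np'_ge0 : 0 <= INR (size s) * p' by apply: Rmult_le_pos; [apply: pos_INR | lra].
have := Rmult_le_compat_l _ _ _ Np'_ge0 (chernoff_exponent eps01).
rewrite -/L /a; nra.
Qed.

End Star.

Lemma cut_star_chernoff (Omega : finType) (P : Omega -> R) (n m : nat)
    (C : vertex n m -> vertex n m -> Omega -> bool) (p' : R) (Vk : {set 'I_n})
    (t : 'I_m) (v : vertex n m) (eps : R) :
  (forall w, 0 <= P w) -> 0 <= p' <= 1 -> indep_bernoulli P C p' -> 0 < eps < 1 ->
  v \in cut_centers Vk ->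
  Pr P (fun w => Rleb (INR (star_sum C v (cut_leaves Vk t v) w))
                      ((1 - eps) * (INR (size (cut_leaves Vk t v)) * p')))
  <= exp (- (eps ^ 2 * INR (n - #|Vk|) * p' / 2)).
Proof.
move=> P_ge0 p'_01 indep eps01 vc.
apply: (Rle_trans _ _ _ (star_chernoff indep (cut_leaves_uniq Vk t v)
                            (cut_leaves_joinable vc) P_ge0 p'_01 eps01)).
apply: exp_le; apply: Ropp_le_contravar.
have := le_INR _ _ (leP (size_cut_leaves Vk t v)).
have : 0 <= eps ^ 2 * p' by apply: Rmult_le_pos; [apply: pow2_ge_0 | lra].
nra.
Qed.

Unset Implicit Arguments.

Theorem theorem8 (Omega : finType) (P : Omega -> R) (n m : nat)
  (C : vertex n m -> vertex n m -> Omega -> bool) (p' : R)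
  (t : 'I_m) (k : nat) (Vk : {set 'I_n}) (eps : R) :
  is_prob P ->
  (forall u v w, C u v w = C v u w) ->
  (forall u v w, ~~ joinable u v -> C u v w = false) ->
  (0 <= p' <= 1)%R ->
  indep_bernoulli P C p' ->
  #|Vk| = k ->
  (0 < eps < 1)%R ->
  (Pr P (fun w => Rleb (INR (cut_capacity C Vk t w))
                       ((1 - eps) * Ex P (fun w' => INR (cut_capacity C Vk t w'))))
   <= exp (- (eps ^ 2 * INR (n - k) * p' / 2 - ln (INR k + 1))))%R.
Proof.
move=> [P_ge0 _] _ _ p'_01 indep card_Vk eps01.
set mean := fun v => INR (size (cut_leaves Vk t v)) * p'.
have cut_sum w : INR (cut_capacity C Vk t w) =
    \big[Rplus/0]_(v <- cut_centers Vk) INR (star_sum C v (cut_leaves Vk t v) w).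
  by rewrite cut_capacity_stars (big_morph INR plus_INR (erefl (INR 0))).
have cut_mean : Ex P (fun w => INR (cut_capacity C Vk t w)) =
    \big[Rplus/0]_(v <- cut_centers Vk) mean v.
  rewrite (Ex_ext P cut_sum) Ex_sum; apply: eq_big_seq => v vc.
  exact: (star_mean indep (cut_leaves_joinable vc)).
have some_star_low w :
    Rleb (INR (cut_capacity C Vk t w))
         ((1 - eps) * Ex P (fun w' => INR (cut_capacity C Vk t w'))) ->
    has (fun v => Rleb (INR (star_sum C v (cut_leaves Vk t v) w)) ((1 - eps) * mean v))
        (cut_centers Vk).
  by rewrite cut_sum cut_mean -sum_scale => /RlebP; apply: sum_le_some_term; rewrite /cut_centers.
apply: (Rle_trans _ _ _ (union_bound P_ge0 some_star_low)).
apply: (Rle_trans _ (\big[Rplus/0]_(v <- cut_centers Vk)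
                      exp (- (eps ^ 2 * INR (n - k) * p' / 2)))).
  by apply: sum_le => v vc; rewrite -card_Vk; apply: cut_star_chernoff.
rewrite sum_const size_cut_centers card_Vk S_INR exp_sub_ln; first exact: Rle_refl.
by have := pos_INR k; lra.
Qed.
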